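(* Let $\theta>1$, let $\eta^n\in\Omega_n$ be arbitrary deterministic configurations, $t\in[0,T]$ and $\lambda>0$. Then $$\limsup_{n\to\infty}\frac1n\log\mathbb P_{\delta_{\eta^n}}\big[\tfrac1nJ^n_{0,1}(t)>\lambda\big]=\limsup_{n\to\infty}\frac1n\log\mathbb P_{\delta_{\eta^n}}\big[\tfrac1nJ^n_{n-1,n}(t)>\lambda\big]=-\infty.$$
   Context: Model: $\Sigma_n=\{1,\dots,n-1\}$, $\Omega_n=\{0,1\}^{\Sigma_n}$, $\alpha,\beta\in(0,1)$, $r_1=\alpha,r_{n-1}=\beta$, $T>0$; $\mathbb P_{\delta_{\eta^n}}$ is the law of the Markov process on $[0,T]$ with generator $n^2\mathcal L_n$, $(\mathcal L_nf)(\eta)=\sum_{x=1}^{n-2}[f(\eta^{x,x+1})-f(\eta)]+n^{-\theta}\sum_{x\in\{1,n-1\}}[r_x(1-\eta(x))+(1-r_x)\eta(x)][f(\sigma^x\eta)-f(\eta)]$ ($\sigma^x\eta$ flips the value at $x$: creation of a particle if $\eta(x)=0$, removal if $\eta(x)=1$), started at $\eta^n$. $J^n_{0,1}(t)$ is the number of particles created at site $1$ minus the number of particles removed at site $1$ (via the boundary flips) during $[0,t]$; $J^n_{n-1,n}(t)$ is the number of particles removed at site $n-1$ minus the number created at site $n-1$ during $[0,t]$. *)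

From HB Require Import structures.
From mathcomp Require Import all_boot all_order all_algebra.
From mathcomp Require Import all_classical all_reals all_analysis.
Set Implicit Arguments. Unset Strict Implicit. Unset Printing Implicit Defensive.
Import Order.TTheory GRing.Theory Num.Theory.
Local Open Scope ring_scope.

(* Configurations: eta : nat -> bool; only the sites 1..n-1 (Sigma_n) are
   ever read or modified by the dynamics, so this is Omega_n up to the
   irrelevant values outside Sigma_n. *)
Definition config := nat -> bool.

Definition swap (eta : config) (x : nat) : config :=
  fun y => if y == x then eta x.+1 else if y == x.+1 then eta x else eta y.

Definition flip (eta : config) (x : nat) : config :=
  fun y => if y == x then ~~ eta x else eta y.

Definition b2R (R : realType) (b : bool) : R := if b then 1 else 0.

Definition brate (R : realType) (r : R) (eta : config) (x : nat) : R :=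
  r * (1 - b2R R (eta x)) + (1 - r) * b2R R (eta x).

(* Observables of the augmented Markov chain (eta_t, J_{0,1}(t), J_{n-1,n}(t))
   on Omega_n x Z x Z. *)
Definition obs (R : realType) := config -> int -> int -> R.

Definition gen (R : realType) (theta alpha beta : R) (n : nat) (f : obs R) : obs R :=
  fun eta a b =>
    (n%:R ^+ 2) *
    ( (\sum_(1 <= x < n.-1) (f (swap eta x) a b - f eta a b))
      + (n%:R `^ (- theta)) *
        ( brate alpha eta 1 *
            (f (flip eta 1) (if eta 1 then a - 1 else a + 1) b - f eta a b)
        + brate beta eta n.-1 *
            (f (flip eta n.-1) a (if eta n.-1 then b + 1 else b - 1) - f eta a b))).

Fixpoint gen_iter (R : realType) (theta alpha beta : R) (n k : nat) (f : obs R) : obs R :=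
  match k with
  | 0 => f
  | k'.+1 => gen theta alpha beta n (gen_iter theta alpha beta n k' f)
  end.

(* Markov semigroup  e^{t n^2 L}  of the (bounded-rate) augmented chain:
   (S_t f)(x) = sum_{k>=0} t^k/k! (Q^k f)(x). *)
Definition semigroup (R : realType) (theta alpha beta : R) (n : nat) (t : R) (f : obs R) : obs R :=
  fun eta a b =>
    limn (fun N => \sum_(0 <= k < N)
      (t ^+ k / (k`!)%:R * gen_iter theta alpha beta n k f eta a b)).

(* P_{delta_eta}[ J_{0,1}(t)/n > lambda ]  (both currents start at 0) *)
Definition prob_J01 (R : realType) (theta alpha beta : R) (n : nat) (eta : config) (t lambda : R) : R :=
  semigroup theta alpha beta n t
    (fun _ a _ => b2R R (lambda < a%:~R / n%:R)) eta 0 0.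

Definition prob_Jn (R : realType) (theta alpha beta : R) (n : nat) (eta : config) (t lambda : R) : R :=
  semigroup theta alpha beta n t
    (fun _ _ b => b2R R (lambda < b%:~R / n%:R)) eta 0 0.

From HB Require Import structures.
From mathcomp Require Import all_boot all_order all_algebra.
From mathcomp Require Import all_classical all_reals all_analysis.
From mathcomp.algebra_tactics Require Import ring lra.
Import Order.TTheory GRing.Theory Num.Theory numFieldNormedType.Exports.
Set Implicit Arguments. Unset Strict Implicit. Unset Printing Implicit Defensive.
Local Open Scope classical_set_scope.
Local Open Scope ring_scope.

(* Uniformization writes the semigroup as [e^(t n^2 L_n) = e^(-C t) e^(t P)] with
   [C = uniform_rate] and [P = jump_op] a positive operator; the two exponential
   series are multiplied as a Cauchy product. For a current [J], the tilt
   [g = exp(gam (J - lam n))] satisfies [P g <= (C + n^(2-theta) (e^gam - 1)) g],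
   since only the boundary flips, which run at rate [n^(2-theta)], move [J], and
   by one unit. The exponential Chebyshev inequality then gives
   [P(J_t > lam n) <= exp(t n^(2-theta) (e^gam - 1) - gam lam n)]. As [theta > 1],
   [1/n] times its logarithm is [-gam lam + o(1)], and [gam] is arbitrary. *)

Section CauchyProduct.
Variable R : realType.
Implicit Types (a b : nat -> R) (r x : R).

Lemma fact_neq0 j : (j`!%:R : R) != 0.
Proof. by rewrite pnatr_eq0 -lt0n fact_gt0. Qed.

Lemma series_exp_coeff_le_expR x N : 0 <= x -> series (exp_coeff x) N <= expR x.
Proof.
move=> x0; apply: nondecreasing_cvgn_le; last exact: is_cvg_series_exp_coeff.
by apply: nondecreasing_series => k _ _; apply: exp_coeff_ge0.
Qed.

Lemma exp_coeff_le_expR x j : 0 <= x -> exp_coeff x j <= expR x.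
Proof.
move=> x0; apply: le_trans (series_exp_coeff_le_expR j.+1 x0).
by rewrite seriesSr lerDr /series /= sumr_ge0 // => i _; apply: exp_coeff_ge0.
Qed.

Lemma exp_coeff_le_geometric r j : 0 <= r ->
  exp_coeff r j <= expR (8 * r) * (8^-1) ^+ j.
Proof.
move=> r0; have -> : exp_coeff r j = exp_coeff (8 * r) j * (8^-1) ^+ j.
  rewrite /exp_coeff /= exprMn exprVn; field; rewrite fact_neq0 /= expf_neq0 //.
apply: ler_wpM2r; first by rewrite exprn_ge0 // invr_ge0.
by apply: exp_coeff_le_expR; lra.
Qed.

Lemma is_cvg_series_exp_dominated a r : 0 <= r ->
  (forall j, `|a j| <= exp_coeff r j) -> cvgn (series a).
Proof.
move=> r0 ha; apply: normed_cvg; apply: nondecreasing_is_cvgn.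
  by apply: nondecreasing_series => j _ _; exact: (normr_ge0 (a j)).
exists (expR r) => _ [N _ <-]; apply: le_trans (series_exp_coeff_le_expR N r0).
by apply: ler_sum => j _; apply: ha.
Qed.

Lemma sum_convolutionE a b N :
  \sum_(0 <= k < N) \sum_(j < k.+1) a j * b (k - j)%N =
  \sum_(j < N) a j * series b (N - j)%N.
Proof.
elim: N => [|N IH]; first by rewrite big_geq // big_ord0.
rewrite big_nat_recr //= IH.
rewrite [RHS](eq_bigr (fun j : 'I_N.+1 => a j * series b (N - j)%N + a j * b (N - j)%N)); last first.
  move=> j _; have jN : (j <= N)%N by rewrite -ltnS.
  by rewrite subSn // seriesS mulrDr addrC.
rewrite big_split /= [X in _ = X + _]big_ord_recr /= subnn.
have -> : series b 0 = 0 by rewrite /series /= big_geq.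
by rewrite mulr0 addr0.
Qed.

Lemma cauchy_product_defect_le a b r N : 0 <= r ->
  (forall j, `|a j| <= exp_coeff r j) -> (forall i, `|b i| <= exp_coeff r i) ->
  `|\sum_(j < N) a j * series b (N - j)%N - series a N * series b N|
     <= expR (8 * r) ^+ 2 * (2^-1) ^+ N.
Proof.
move=> r0 ha hb; set E := expR (8 * r); set e := E ^+ 2 * (8^-1) ^+ N.
have e0 : 0 <= e by rewrite mulr_ge0 ?exprn_ge0 ?invr_ge0 ?expR_ge0.
(* only products a_j b_i with j + i >= N survive, and each is at most e *)
have hab j i : (N <= j + i)%N -> `|a j| * `|b i| <= e.
  move=> hji; apply: le_trans (ler_pM _ _ (ha j) (hb i)) _ => //.
  apply: le_trans (ler_pM _ _ (exp_coeff_le_geometric j r0)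
                              (exp_coeff_le_geometric i r0)) _.
  - exact: exp_coeff_ge0.
  - exact: exp_coeff_ge0.
  rewrite mulrACA -expr2 -exprD; apply: ler_wpM2l; first by rewrite exprn_ge0.
  by apply: ler_wiXn2l => //; lra.
have -> : series a N * series b N = \sum_(j < N) a j * series b N.
  by rewrite /series /= big_mkord mulr_suml.
rewrite -sumrB; apply: le_trans (ler_norm_sum _ _ _) _.
apply: (@le_trans _ _ (\sum_(j < N) e *+ N)).
  apply: ler_sum => j _.
  have -> : series b N = series b (N - j)%N + \sum_((N - j)%N <= i < N) b i.
    by rewrite /series /= -big_cat_nat // leq_subr.
  rewrite mulrDr opprD addrA subrr add0r normrN normrM.
  apply: le_trans (ler_wpM2l (normr_ge0 _) (ler_norm_sum _ _ _)) _.
  rewrite mulr_sumr; apply: (@le_trans _ _ (\sum_((N - j)%N <= i < N) e)).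
    apply: ler_sum_nat => i /andP[hi1 _]; apply: hab.
    by rewrite -(leq_add2l j) subnKC // ltnW in hi1.
  by rewrite sumr_const_nat ler_wpMn2l // leq_subr.
rewrite sumr_const card_ord -mulrnA -[e *+ _]mulr_natr /e -[_ * _ * _%:R]mulrA.
apply: ler_wpM2l; first by rewrite exprn_ge0 ?expR_ge0.
have hN : (N * N <= 4 ^ N)%N.
  by rewrite (_ : 4 = 2 * 2)%N // expnMn leq_mul // ltnW // ltn_expl.
apply: (@le_trans _ _ ((8^-1) ^+ N * 4%:R ^+ N)).
  by apply: ler_wpM2l; [rewrite exprn_ge0 ?invr_ge0|rewrite -natrX ler_nat].
by rewrite -exprMn lerXn2r ?nnegrE; lra.
Qed.

Lemma cvg_cauchy_product a b r : 0 <= r ->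
  (forall j, `|a j| <= exp_coeff r j) -> (forall i, `|b i| <= exp_coeff r i) ->
  (fun N : nat => \sum_(0 <= k < N) \sum_(j < k.+1) a j * b (k - j)%N) @ \oo -->
    limn (series a) * limn (series b).
Proof.
move=> r0 ha hb; set K := expR (8 * r) ^+ 2.
have geom0 : (fun N => K * (2^-1) ^+ N) @ \oo --> (0 : R).
  by rewrite -(mulr0 K); apply: cvgM; [exact: cvg_cst|apply: cvg_expr; rewrite ger0_norm; lra].
have defect0 : (fun N => \sum_(j < N) a j * series b (N - j)%N
                        - series a N * series b N) @ \oo --> (0 : R).
  apply: (@squeeze_cvgr _ _ _ _ (fun N => - (K * (2^-1) ^+ N)) (fun N => K * (2^-1) ^+ N)).
  - by apply: nearW => N; rewrite -ler_norml; apply: cauchy_product_defect_le.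
  - by rewrite -oppr0; apply: cvgN.
  - exact: geom0.
have -> : (fun N : nat => \sum_(0 <= k < N) \sum_(j < k.+1) a j * b (k - j)%N) =
    (fun N => (\sum_(j < N) a j * series b (N - j)%N - series a N * series b N)
              + series a N * series b N).
  by apply/funext => N; rewrite sum_convolutionE subrK.
rewrite -[X in _ --> X]add0r; apply: cvgD => //; apply: cvgM.
- exact: is_cvg_series_exp_dominated ha.
- exact: is_cvg_series_exp_dominated hb.
Qed.

Lemma exp_coeff_binomialE C t (V : nat -> R) k :
  exp_coeff t k * \sum_(j < k.+1) ('C(k, j)%:R * (- C) ^+ (k - j)%N) * V j =
  \sum_(j < k.+1) (exp_coeff t j * V j) * exp_coeff (- (C * t)) (k - j)%N.
Proof.
rewrite mulr_sumr; apply: eq_bigr => j _; rewrite /exp_coeff /=.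
have jk : (j <= k)%N by rewrite -ltnS.
have -> : ('C(k, j)%:R : R) = k`!%:R / (j`!%:R * (k - j)`!%:R).
  by rewrite -(bin_fact jk) !natrM mulfK // mulf_neq0 ?fact_neq0.
rewrite -{1}(subnKC jk) exprD -mulNr exprMn; field.
by rewrite !fact_neq0.
Qed.

End CauchyProduct.

Section UniformizedGenerator.
Variables (R : realType) (theta alpha beta : R) (n : nat).
Hypotheses (alpha01 : 0 <= alpha <= 1) (beta01 : 0 <= beta <= 1).
Implicit Types (f g : obs R) (eta : config) (a b : int).

(* Uniformization: subtracting the constant [uniform_rate] from the generator
   leaves a positive operator, into which the diagonal boundary weight
   [2 - c_1 - c_(n-1)] is absorbed. *)
Definition jump_op f : obs R := fun eta a b =>
  n%:R ^+ 2 * (\sum_(1 <= x < n.-1) f (swap eta x) a b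
    + n%:R `^ (- theta) *
      ((2 - brate alpha eta 1 - brate beta eta n.-1) * f eta a b
       + brate alpha eta 1 * f (flip eta 1) (if eta 1 then a - 1 else a + 1) b
       + brate beta eta n.-1 * f (flip eta n.-1) a (if eta n.-1 then b + 1 else b - 1))).

Definition uniform_rate : R :=
  n%:R ^+ 2 * ((n.-1 - 1)%:R + 2 * n%:R `^ (- theta)).

Lemma genE f eta a b :
  gen theta alpha beta n f eta a b = jump_op f eta a b - uniform_rate * f eta a b.
Proof. by rewrite /gen /jump_op /uniform_rate sumrB sumr_const_nat -mulr_natr; ring. Qed.

Lemma uniform_rate_ge0 : 0 <= uniform_rate.
Proof. by rewrite mulr_ge0 ?exprn_ge0 // addr_ge0 // mulr_ge0 // powR_ge0. Qed.

Lemma jump_opD f g eta a b :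
  jump_op (fun e a b => f e a b + g e a b) eta a b =
  jump_op f eta a b + jump_op g eta a b.
Proof. by rewrite /jump_op big_split /=; ring. Qed.

Lemma jump_opZ c f eta a b :
  jump_op (fun e a b => c * f e a b) eta a b = c * jump_op f eta a b.
Proof. by rewrite /jump_op -mulr_sumr; ring. Qed.

Lemma jump_op_cst c eta a b : jump_op (fun _ _ _ => c) eta a b = uniform_rate * c.
Proof. by rewrite /jump_op /uniform_rate sumr_const_nat -mulr_natr; ring. Qed.

Lemma jump_op_sum m (c : nat -> R) (F : nat -> obs R) eta a b :
  jump_op (fun e a b => \sum_(j < m) c j * F j e a b) eta a b =
  \sum_(j < m) c j * jump_op (F j) eta a b.
Proof.
elim: m eta a b => [|m IH] eta a b.
  under eq_fun do under eq_fun do under eq_fun do rewrite big_ord0.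
  by rewrite jump_op_cst big_ord0 mulr0.
under eq_fun do under eq_fun do under eq_fun do rewrite big_ord_recr.
by rewrite jump_opD jump_opZ big_ord_recr IH.
Qed.

Lemma brate_ge0 (r : R) eta x : 0 <= r <= 1 -> 0 <= brate r eta x.
Proof. by move=> /andP[r0 r1]; rewrite /brate /b2R; case: (eta x); lra. Qed.

Lemma brate_le1 (r : R) eta x : 0 <= r <= 1 -> brate r eta x <= 1.
Proof. by move=> /andP[r0 r1]; rewrite /brate /b2R; case: (eta x); lra. Qed.

Lemma le_jump_op f g : (forall eta a b, f eta a b <= g eta a b) ->
  forall eta a b, jump_op f eta a b <= jump_op g eta a b.
Proof.
move=> fg eta a b; have p0 := @powR_ge0 R n%:R (- theta).
have := brate_ge0 eta 1 alpha01; have := brate_le1 eta 1 alpha01.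
have := brate_ge0 eta n.-1 beta01; have := brate_le1 eta n.-1 beta01.
move=> rb1 rb0 ra1 ra0.
apply: ler_wpM2l; first by rewrite exprn_ge0.
apply: lerD; first by apply: ler_sum => x _; apply: fg.
apply: ler_wpM2l => //; apply: lerD; first apply: lerD.
- by apply: ler_wpM2l; [lra|apply: fg].
- by apply: ler_wpM2l => //; apply: fg.
- by apply: ler_wpM2l => //; apply: fg.
Qed.

Lemma le_iter_jump_op k f g : (forall eta a b, f eta a b <= g eta a b) ->
  forall eta a b, iter k jump_op f eta a b <= iter k jump_op g eta a b.
Proof. by move=> fg; elim: k => [|k IH] //= eta a b; apply: le_jump_op. Qed.

Lemma iter_jump_op_cst k c eta a b :
  iter k jump_op (fun _ _ _ => c) eta a b = uniform_rate ^+ k * c.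
Proof.
elim: k eta a b => [|k IH] eta a b /=; first by rewrite mul1r.
have -> : iter k jump_op (fun _ _ _ => c) = (fun _ _ _ => uniform_rate ^+ k * c).
  by apply/funext => e; apply/funext => a'; apply/funext => b'; apply: IH.
by rewrite jump_op_cst exprS mulrA.
Qed.

Lemma iter_jump_op_le_geometric k g L : 0 <= L ->
  (forall eta a b, jump_op g eta a b <= L * g eta a b) ->
  forall eta a b, iter k jump_op g eta a b <= L ^+ k * g eta a b.
Proof.
move=> L0 gL; elim: k => [|k IH] eta a b /=; first by rewrite mul1r.
apply: le_trans (le_jump_op IH eta a b) _.
by rewrite jump_opZ exprSr -mulrA ler_wpM2l ?exprn_ge0.
Qed.

Lemma iter_jump_op_unit_bounds k f : (forall eta a b, 0 <= f eta a b <= 1) ->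
  forall eta a b, 0 <= iter k jump_op f eta a b <= uniform_rate ^+ k.
Proof.
move=> f01 eta a b; apply/andP; split.
  rewrite -[0](mulr0 (uniform_rate ^+ k)) -(iter_jump_op_cst k 0 eta a b).
  by apply: le_iter_jump_op => e a' b'; case/andP: (f01 e a' b').
rewrite -[X in _ <= X](mulr1 (uniform_rate ^+ k)) -(iter_jump_op_cst k 1 eta a b).
by apply: le_iter_jump_op => e a' b'; case/andP: (f01 e a' b').
Qed.

Lemma gen_iter_binomial k f eta a b :
  gen_iter theta alpha beta n k f eta a b =
  \sum_(j < k.+1) ('C(k, j)%:R * (- uniform_rate) ^+ (k - j)%N) *
    iter j jump_op f eta a b.
Proof.
elim: k eta a b => [|k IH] eta a b; first by rewrite big_ord1 bin0 expr0 !mul1r.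
rewrite /= genE.
have -> : gen_iter theta alpha beta n k f = fun e a b =>
    \sum_(j < k.+1) ('C(k, j)%:R * (- uniform_rate) ^+ (k - j)%N) *
      iter j jump_op f e a b.
  by apply/funext => e; apply/funext => a'; apply/funext => b'; apply: IH.
rewrite (jump_op_sum _ (fun j => 'C(k, j)%:R * (- uniform_rate) ^+ (k - j)%N)
                       (fun j => iter j jump_op f)).
rewrite [RHS]big_ord_recl /= bin0 subn0.
under [X in _ = _ + X]eq_bigr => i _ do
  rewrite /bump /= add1n binS natrD mulrDl subSS mulrDl add0n.
rewrite big_split /= [X in _ = _ + X]addrC addrCA; congr (_ + _).
rewrite mulr_sumr -sumrN big_ord_recl /= bin0 subn0.
rewrite [X in _ = _ + X]big_ord_recr /= bin_small // !mul0r addr0.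
congr (_ + _); first by rewrite exprS; ring.
apply: eq_bigr => i _; rewrite /bump /= add1n.
by rewrite -[(k - i)%N]subSS subSn ?ltn_ord // exprS; ring.
Qed.
End UniformizedGenerator.

Section Semigroup.
Variables (R : realType) (theta alpha beta : R) (n : nat).
Hypotheses (alpha01 : 0 <= alpha <= 1) (beta01 : 0 <= beta <= 1).
Local Notation jump_op := (jump_op theta alpha beta n).
Local Notation C := (uniform_rate theta n).

Lemma semigroup_uniformizedE t (f : obs R) eta a b : 0 <= t ->
  (forall eta a b, 0 <= f eta a b <= 1) ->
  semigroup theta alpha beta n t f eta a b =
  expR (- (C * t)) * limn (series (fun j => exp_coeff t j * iter j jump_op f eta a b)).
Proof.
move=> t0 f01; set A := fun j => _.
have Ct0 : 0 <= C * t by rewrite mulr_ge0 ?uniform_rate_ge0.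
have hA j : `|A j| <= exp_coeff (C * t) j.
  have /andP[V0 V1] := iter_jump_op_unit_bounds theta n alpha01 beta01 j f01 eta a b.
  rewrite /A /exp_coeff /= ger0_norm; last by rewrite mulr_ge0 ?divr_ge0 ?exprn_ge0.
  rewrite [X in _ <= X](_ : _ = t ^+ j / j`!%:R * C ^+ j); last by rewrite exprMn; ring.
  by apply: ler_wpM2l => //; rewrite divr_ge0 ?exprn_ge0.
have hB i : `|exp_coeff (- (C * t)) i| <= exp_coeff (C * t) i.
  by rewrite /exp_coeff /= normrM normrX normrN normfV !ger0_norm.
rewrite /semigroup.
have -> : (fun N => \sum_(0 <= k < N) t ^+ k / k`!%:R * gen_iter theta alpha beta n k f eta a b)
    = (fun N => \sum_(0 <= k < N) \sum_(j < k.+1) A j * exp_coeff (- (C * t)) (k - j)%N).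
  apply/funext => N; apply: eq_bigr => k _.
  by rewrite gen_iter_binomial -[t ^+ k / _]/(exp_coeff t k)
     (exp_coeff_binomialE _ _ (fun j => iter j jump_op f eta a b)).
by rewrite (cvg_lim _ (cvg_cauchy_product Ct0 hA hB)) // mulrC.
Qed.

Lemma semigroup_le_supermartingale t L (f g : obs R) eta a b : 0 <= t -> 0 <= L ->
  (forall eta a b, 0 <= f eta a b <= 1) -> (forall eta a b, f eta a b <= g eta a b) ->
  (forall eta a b, jump_op g eta a b <= L * g eta a b) ->
  semigroup theta alpha beta n t f eta a b <=
  expR (- (C * t)) * (expR (t * L) * g eta a b).
Proof.
move=> t0 L0 f01 fg gL; rewrite semigroup_uniformizedE //.
apply: ler_wpM2l; first exact: expR_ge0.
set A := fun j => _.
have A0 j : 0 <= A j.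
  have /andP[V0 _] := iter_jump_op_unit_bounds theta n alpha01 beta01 j f01 eta a b.
  by rewrite mulr_ge0 ?exp_coeff_ge0.
have g0 : 0 <= g eta a b by apply: le_trans (fg eta a b); case/andP: (f01 eta a b).
have sA N : series A N <= expR (t * L) * g eta a b.
  have tL0 : 0 <= t * L by rewrite mulr_ge0.
  apply: le_trans (ler_wpM2r g0 (series_exp_coeff_le_expR N tL0)).
  rewrite /series /= mulr_suml; apply: ler_sum => k _.
  have -> : exp_coeff (t * L) k * g eta a b = exp_coeff t k * (L ^+ k * g eta a b).
    by rewrite /exp_coeff /= exprMn; ring.
  apply: ler_wpM2l; first exact: exp_coeff_ge0.
  apply: le_trans (le_iter_jump_op theta n alpha01 beta01 k fg eta a b) _.
  exact: iter_jump_op_le_geometric.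
have cvgA : cvgn (series A).
  apply: nondecreasing_is_cvgn; first by apply: nondecreasing_series => j _ _.
  by exists (expR (t * L) * g eta a b) => _ [N _ <-].
by apply: limr_le => //; apply: nearW.
Qed.
End Semigroup.

Lemma convex_le_mul (R : realType) (r G X E : R) :
  0 <= r <= 1 -> 0 <= G -> 1 <= E -> X <= E * G -> r * X + (1 - r) * G <= E * G.
Proof.
move=> /andP[r0 r1] G0 E1 XG.
have rX : r * X <= r * (E * G) by apply: ler_wpM2l.
have rG : (1 - r) * G <= (1 - r) * (E * G).
  by apply: ler_wpM2l; [lra|rewrite ler_peMl].
lra.
Qed.

Lemma b2R_itv (R : realType) (c : bool) : 0 <= b2R R c <= 1.
Proof. by case: c; rewrite /b2R lexx ler01. Qed.

Definition tilt (R : realType) (gam lam : R) (n : nat) (c : int) : R :=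
  expR (gam * (c%:~R - lam * n%:R)).

Section ExponentialTilt.
Variables (R : realType) (theta alpha beta gam lam : R) (n : nat).
Hypotheses (alpha01 : 0 <= alpha <= 1) (beta01 : 0 <= beta <= 1) (gam0 : 0 <= gam).
Local Notation tilt := (tilt gam lam n).
Local Notation C := (uniform_rate theta n).
Local Notation excess := (n%:R ^+ 2 * n%:R `^ (- theta) * (expR gam - 1)).

Lemma expR_gam_ge1 : 1 <= expR gam.
Proof. by rewrite -expR0 ler_expR. Qed.

Lemma indicator_le_tilt c : (0 < n)%N -> b2R R (lam < c%:~R / n%:R) <= tilt c.
Proof.
move=> n0; rewrite /b2R; case: ifPn => [|_]; last exact: expR_ge0.
rewrite ltr_pdivlMr ?ltr0n // => lt_lam.
by rewrite -expR0 ler_expR mulr_ge0 // subr_ge0 ltW.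
Qed.

Lemma tilt_step_le (s : bool) c :
  tilt (if s then c - 1 else c + 1) <= expR gam * tilt c.
Proof.
rewrite /tilt -expRD ler_expR; case: s; rewrite ?intrB ?intrD; move: gam0; nra.
Qed.

Lemma jump_op_le_of_boundary (f : obs R) eta a b :
  (forall x, f (swap eta x) a b = f eta a b) ->
  (2 - brate alpha eta 1 - brate beta eta n.-1) * f eta a b
    + brate alpha eta 1 * f (flip eta 1) (if eta 1 then a - 1 else a + 1) b
    + brate beta eta n.-1 * f (flip eta n.-1) a (if eta n.-1 then b + 1 else b - 1)
    <= (1 + expR gam) * f eta a b ->
  jump_op theta alpha beta n f eta a b <= (C + excess) * f eta a b.
Proof.
move=> bulk boundary; rewrite /jump_op.
under eq_bigr do rewrite bulk.
rewrite sumr_const_nat; set G := f eta a b; set p := n%:R `^ (- theta).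
have -> : (C + excess) * G = n%:R ^+ 2 * (G *+ (n.-1 - 1) + p * ((1 + expR gam) * G)).
  by rewrite /uniform_rate -[G *+ _]mulr_natr /p; ring.
apply: ler_wpM2l; first exact: exprn_ge0.
by rewrite lerD2l; apply: ler_wpM2l => //; apply: powR_ge0.
Qed.

Lemma jump_op_tilt_left eta a b :
  jump_op theta alpha beta n (fun _ a _ => tilt a) eta a b <= (C + excess) * tilt a.
Proof.
apply: jump_op_le_of_boundary => //=.
set r1 := brate alpha eta 1.
have r01 : 0 <= r1 <= 1 by rewrite brate_ge0 ?brate_le1.
rewrite [X in _ <= X]mulrDl mul1r.
rewrite (_ : _ + _ + _ = tilt a + (r1 * tilt (if eta 1 then a - 1 else a + 1)
                                  + (1 - r1) * tilt a)); last by ring.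
rewrite lerD2l; apply: convex_le_mul r01 (expR_ge0 _) expR_gam_ge1 _.
exact: tilt_step_le.
Qed.

Lemma jump_op_tilt_right eta a b :
  jump_op theta alpha beta n (fun _ _ b => tilt b) eta a b <= (C + excess) * tilt b.
Proof.
apply: jump_op_le_of_boundary => //=.
set r2 := brate beta eta n.-1.
have r02 : 0 <= r2 <= 1 by rewrite brate_ge0 ?brate_le1.
rewrite [X in _ <= X]mulrDl mul1r.
rewrite (_ : _ + _ + _ = tilt b + (r2 * tilt (if eta n.-1 then b + 1 else b - 1)
                                  + (1 - r2) * tilt b)); last by ring.
rewrite lerD2l; apply: convex_le_mul r02 (expR_ge0 _) expR_gam_ge1 _.
by have := tilt_step_le (~~ eta n.-1) b; case: (eta n.-1).
Qed.

Lemma excess_ge0 : 0 <= excess.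
Proof.
by rewrite mulr_ge0 ?mulr_ge0 ?exprn_ge0 ?powR_ge0 // subr_ge0 expR_gam_ge1.
Qed.

Lemma expR_tilt_boundE t :
  expR (- (C * t)) * (expR (t * (C + excess)) * tilt 0) =
  expR (t * excess - gam * lam * n%:R).
Proof. by rewrite /tilt -!expRD; congr expR; rewrite mulr0z; ring. Qed.

Lemma prob_J01_le eta t : (0 < n)%N -> 0 <= t ->
  prob_J01 theta alpha beta n eta t lam <= expR (t * excess - gam * lam * n%:R).
Proof.
move=> n0 t0; rewrite -expR_tilt_boundE.
apply: (@semigroup_le_supermartingale _ theta _ _ n alpha01 beta01 t _ _
          (fun _ a _ => tilt a)).
- exact: t0.
- by rewrite addr_ge0 ?uniform_rate_ge0 ?excess_ge0.
- by move=> *; apply: b2R_itv.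
- by move=> e a b; apply: indicator_le_tilt.
- exact: jump_op_tilt_left.
Qed.

Lemma prob_Jn_le eta t : (0 < n)%N -> 0 <= t ->
  prob_Jn theta alpha beta n eta t lam <= expR (t * excess - gam * lam * n%:R).
Proof.
move=> n0 t0; rewrite -expR_tilt_boundE.
apply: (@semigroup_le_supermartingale _ theta _ _ n alpha01 beta01 t _ _
          (fun _ _ b => tilt b)).
- exact: t0.
- by rewrite addr_ge0 ?uniform_rate_ge0 ?excess_ge0.
- by move=> *; apply: b2R_itv.
- by move=> e a b; apply: indicator_le_tilt.
- exact: jump_op_tilt_right.
Qed.
End ExponentialTilt.

Section Asymptotics.
Variable R : realType.

Lemma near_scaled_powR_le (theta eps : R) : 1 < theta -> 0 < eps ->
  \forall n \near \oo, n%:R * n%:R `^ (- theta) <= eps.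
Proof.
move=> theta1 eps0; set M := eps^-1 `^ (theta - 1)^-1.
exists (Num.truncn M).+1 => // n /= Mn.
have {}Mn : M < n%:R by apply: lt_le_trans (truncnS_gt M) _; rewrite ler_nat.
have n0 : 0 < n%:R :> R by apply: le_lt_trans Mn; apply: powR_ge0.
have -> : n%:R * n%:R `^ (- theta) = (n%:R `^ (theta - 1))^-1.
  rewrite powRN -(mulr_powRB1 (ltW n0)) ?invfM ?mulrA ?mulfV ?mul1r //; last by lra.
  exact: lt0r_neq0.
rewrite invf_ple ?posrE ?powR_gt0 //.
have -> : eps^-1 = M `^ (theta - 1).
  by rewrite /M -powRrM mulVf ?powRr1 ?invr_ge0 ?ltW //; apply: lt0r_neq0; lra.
by apply: ge0_ler_powR; rewrite ?nnegrE ?powR_ge0 ?ltW //; lra.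
Qed.

Lemma scaled_lne_le (n : nat) (p z : R) : (0 < n)%N -> p <= expR z ->
  (((n%:R)^-1)%:E * lne p%:E <= ((n%:R)^-1 * z)%:E)%E.
Proof.
move=> n0 pz; have [p0|p0] := leP p 0.
  by rewrite le0_lneNy ?lee_fin // mulrNy gtr0_sg ?invr_gt0 ?ltr0n // mul1e leNye.
rewrite lne_EFin // -EFinM lee_fin ler_wpM2l ?invr_ge0 ?ler0n //.
by rewrite -[z]expRK ler_ln ?posrE ?expR_gt0.
Qed.

Lemma scaled_lne_cvgNy (theta lam t : R) (P : nat -> R) :
  1 < theta -> 0 < lam -> 0 <= t ->
  (forall gam, 0 < gam -> forall n, (0 < n)%N ->
     P n <= expR (t * (n%:R ^+ 2 * n%:R `^ (- theta) * (expR gam - 1)) - gam * lam * n%:R)) ->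
  (fun n => ((n%:R)^-1)%:E * lne (P n)%:E)%E @ \oo --> -oo%E.
Proof.
move=> theta1 lam0 t0 HP; apply/cvgeNyPle => A.
(* tilt so that the gain [gam * lam] is [2 (|A| + 1)]; the boundary cost
   [c * n^(1-theta)] eventually eats at most half of it *)
set gam := 2 * (`|A| + 1) / lam; set c := t * (expR gam - 1).
have gam0 : 0 < gam by rewrite divr_gt0 // mulr_gt0 // ltr_pwDr.
have c0 : 0 <= c by rewrite mulr_ge0 // subr_ge0 -expR0 ler_expR ltW.
have eps0 : 0 < gam * lam / (2 * (c + 1)).
  by rewrite divr_gt0 ?mulr_gt0 ?invr_gt0 //; lra.
near=> n.
have n0 : (0 < n)%N by near: n; exists 1%N.
apply: le_trans (scaled_lne_le n0 (HP gam gam0 n n0)) _; rewrite lee_fin.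
have -> : (n%:R)^-1 * (t * (n%:R ^+ 2 * n%:R `^ (- theta) * (expR gam - 1))
                      - gam * lam * n%:R)
    = c * (n%:R * n%:R `^ (- theta)) - gam * lam.
  by rewrite /c; field; rewrite pnatr_eq0 -lt0n.
have boundary_cost : c * (n%:R * n%:R `^ (- theta)) <= gam * lam / 2.
  apply: le_trans (_ : c * (gam * lam / (2 * (c + 1))) <= _).
    by apply: ler_wpM2l => //; near: n; apply: near_scaled_powR_le.
  rewrite mulrA ler_pdivrMr; last by lra.
  rewrite [X in _ <= X](_ : _ = gam * lam * (c + 1)); last by field.
  rewrite mulrC; apply: ler_wpM2l; last by rewrite lerDl.
  by rewrite mulr_ge0 // ltW.
have gam_lam : gam * lam = 2 * (`|A| + 1) by rewrite /gam mulfVK // gt_eqF.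
have := ler_norm (- A); rewrite normrN; lra.
Unshelve. all: by end_near.
Qed.
End Asymptotics.

Theorem mainTheorem9 (R : realType) (alpha beta theta T t lambda : R)
  (etan : nat -> config)
  (halpha : 0 < alpha < 1) (hbeta : 0 < beta < 1) (htheta : 1 < theta)
  (hT : 0 < T) (ht : 0 <= t <= T) (hlambda : 0 < lambda) :
  limn_esup (fun n : nat =>
      ((n%:R)^-1)%:E * lne (prob_J01 theta alpha beta n (etan n) t lambda)%:E)%E
    = -oo%E
  /\
  limn_esup (fun n : nat =>
      ((n%:R)^-1)%:E * lne (prob_Jn theta alpha beta n (etan n) t lambda)%:E)%E
    = -oo%E.
Proof.
have alpha01 : 0 <= alpha <= 1 by case/andP: halpha => ? ?; rewrite !ltW.
have beta01 : 0 <= beta <= 1 by case/andP: hbeta => ? ?; rewrite !ltW.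
have t0 : 0 <= t by case/andP: ht.
split; apply: (cvgNy_limn_einf_sup _).2;
  apply: (scaled_lne_cvgNy htheta hlambda t0) => gam gam0 n n0.
- by apply: prob_J01_le => //; apply: ltW.
- by apply: prob_Jn_le => //; apply: ltW.
Qed.
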